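(* Let $1\le s<t$ be integers and let $n$ be sufficiently large. If $G$ is a $K_{s,t}$-saturated $n$ by $n$ bipartite graph with minimum degree $\delta<t-1$, then $G$ has at least $(s+t-2)n-(t-1)(t-2)$ edges.
   Context: An $n$ by $n$ bipartite graph $G$ has two color classes $U,U'$ with $|U|=|U'|=n$. Such a $G$ is called $K_{s,t}$-saturated if $G$ contains no subgraph isomorphic to $K_{s,t}$ (with either side of $K_{s,t}$ lying in either class), but adding any missing edge $uu'$ with $u\in U$, $u'\in U'$ creates a subgraph isomorphic to $K_{s,t}$ (with either orientation). *)

From mathcomp Require Import all_boot.
Set Implicit Arguments. Unset Strict Implicit. Unset Printing Implicit Defensive.

(* An n by n bipartite graph: colour classes U = 'I_n and U' = 'I_n (two
   disjoint copies); the graph is given by its edge set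
   E : {set 'I_n * 'I_n}, where (u, u') \in E means u \in U is adjacent to
   u' \in U'. *)

Definition has_Kab n (E : {set 'I_n * 'I_n}) (a b : nat) : Prop :=
  exists (A B : {set 'I_n}),
    [/\ #|A| = a, #|B| = b & forall u v, u \in A -> v \in B -> (u, v) \in E].

Definition contains_Kst n (E : {set 'I_n * 'I_n}) (s t : nat) : Prop :=
  has_Kab E s t \/ has_Kab E t s.

Definition Kst_saturated n (E : {set 'I_n * 'I_n}) (s t : nat) : Prop :=
  ~ contains_Kst E s t /\
  forall u v, (u, v) \notin E -> contains_Kst ((u, v) |: E) s t.

Definition degU n (E : {set 'I_n * 'I_n}) (u : 'I_n) : nat :=
  #|[set v | (u, v) \in E]|.
Definition degU' n (E : {set 'I_n * 'I_n}) (v : 'I_n) : nat :=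
  #|[set u | (u, v) \in E]|.

(* Minimum degree over all 2n vertices (degrees are <= n, so n is a neutral
   starting value; the case n = 0 is irrelevant). *)
Definition min_degree n (E : {set 'I_n * 'I_n}) : nat :=
  minn (\big[minn/n]_(u : 'I_n) degU E u) (\big[minn/n]_(v : 'I_n) degU' E v).

From mathcomp Require Import all_boot zify.
Set Implicit Arguments. Unset Strict Implicit.

(* Up to swapping the two classes, some x in U has degree d < t - 1; let S be
   its neighbourhood and Y the set of u in U with at least s - 1 neighbours
   in S. Every vertex has degree at least s - 1. For v outside S, adding xv
   creates a K_{s,t} through x and v; since d < t - 1, x lies on its t-side,
   so v has t - 1 neighbours in Y. Counting the edges from Y to the
   complement of S twice gives |E| >= (s - 1) n + (t - 1)(n - d), and
   d <= t - 2 yields the bound. *)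

Lemma card_set_pairs (T1 T2 : finType) (E : {set T1 * T2}) :
  #|E| = \sum_(u : T1) #|[set v | (u, v) \in E]|.
Proof.
under eq_bigr do rewrite -sum1dep_card.
by rewrite pair_big_dep -sum1_card; apply: eq_bigl => -[u v].
Qed.

Lemma double_count (T1 T2 : finType) (A : {set T1}) (B : {set T2})
    (R : T1 -> T2 -> bool) :
  \sum_(x in A) #|[set y in B | R x y]| = \sum_(y in B) #|[set x in A | R x y]|.
Proof.
have card_sum (T : finType) (C : {set T}) (P : pred T) :
    #|[set z in C | P z]| = \sum_(z in C) P z.
  by rewrite -sum1dep_card big_mkcondr; apply: eq_bigr => z _; case: (P z).
under eq_bigr do rewrite card_sum.
by rewrite exchange_big; apply: eq_bigr => y _; rewrite card_sum.
Qed.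

Lemma bigminn_lt (T : finType) (f : T -> nat) m c :
  c <= m -> \big[minn/m]_(i : T) f i < c -> exists i, f i < c.
Proof.
move=> le_cm lt_min; apply/existsP; apply: contraTT lt_min => /existsPn not_lt.
rewrite -leqNgt; apply: (big_ind (leq c)) => // [a b ca cb | i _].
  by rewrite leq_min ca.
by rewrite leqNgt not_lt.
Qed.

Definition nbhU n (E : {set 'I_n * 'I_n}) (u : 'I_n) : {set 'I_n} :=
  [set v | (u, v) \in E].

Lemma degUE n (E : {set 'I_n * 'I_n}) u : degU E u = #|nbhU E u|.
Proof. by []. Qed.

Lemma has_Kab_setU1 n (E : {set 'I_n * 'I_n}) u v a b :
  has_Kab ((u, v) |: E) a b -> ~ has_Kab E a b ->
  exists A B : {set 'I_n}, [/\ #|A| = a, #|B| = b, u \in A, v \in B &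
    forall y w, y \in A -> w \in B -> (y, w) != (u, v) -> (y, w) \in E].
Proof.
move=> [A [B [cardA cardB AB_E]]] not_Kab.
have AB_E' y w : y \in A -> w \in B -> (y, w) != (u, v) -> (y, w) \in E.
  by move=> yA wB ne; move: (AB_E y w yA wB); rewrite in_setU1 (negbTE ne).
have [/andP [uA vB] | uv_out] := boolP ((u \in A) && (v \in B)).
  by exists A, B.
case: not_Kab; exists A, B; split=> // y w yA wB; apply: AB_E' => //.
by apply: contraNneq uv_out => -[<- <-]; rewrite yA wB.
Qed.

Lemma has_Kab_transposed n (F G : {set 'I_n * 'I_n}) a b :
  (forall u v, (u, v) \in F -> (v, u) \in G) -> has_Kab F a b -> has_Kab G b a.
Proof.
move=> FG [A [B [cardA cardB AB_F]]].
by exists B, A; split=> // v u vB uA; apply/FG/AB_F.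
Qed.

Lemma contains_Kst_transposed n (F G : {set 'I_n * 'I_n}) s t :
  (forall u v, (u, v) \in F -> (v, u) \in G) ->
  contains_Kst F s t -> contains_Kst G s t.
Proof. by move=> FG [K | K]; [right | left]; apply: has_Kab_transposed K. Qed.

Lemma Kst_saturated_transpose n (E : {set 'I_n * 'I_n}) s t :
  Kst_saturated E s t -> Kst_saturated (swap_pair @^-1: E) s t.
Proof.
move=> [K_free K_max]; split.
  by apply: contra_not K_free; apply: contains_Kst_transposed => u v; rewrite inE.
move=> u v; rewrite inE => /K_max; apply: contains_Kst_transposed => a b.
by rewrite !inE /= xpair_eqE => /orP [/andP [/eqP -> /eqP ->] | ->]; rewrite ?eqxx ?orbT.
Qed.

Lemma card_transpose n (E : {set 'I_n * 'I_n}) : #|swap_pair @^-1: E| = #|E|.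
Proof. by apply: card_preimset; apply: can_inj swap_pairK. Qed.

Lemma degU_transpose n (E : {set 'I_n * 'I_n}) v :
  degU (swap_pair @^-1: E) v = degU' E v.
Proof. by apply: eq_card => u; rewrite !inE. Qed.

Section Saturated.

Variables (n s t : nat) (E : {set 'I_n * 'I_n}).
Hypothesis sat : Kst_saturated E s t.

Lemma saturated_nonedge u v : (u, v) \notin E ->
  exists A B : {set 'I_n},
    [/\ (#|A| = s /\ #|B| = t) \/ (#|A| = t /\ #|B| = s), u \in A, v \in B &
        forall y w, y \in A -> w \in B -> (y, w) != (u, v) -> (y, w) \in E].
Proof.
case: sat => K_free K_max /K_max [K | K].
  have [|A [B [cardA cardB uA vB AB_E]]] := has_Kab_setU1 K.
    by move=> K'; apply: K_free; left.
  by exists A, B; split=> //; left.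
have [|A [B [cardA cardB uA vB AB_E]]] := has_Kab_setU1 K.
  by move=> K'; apply: K_free; right.
by exists A, B; split=> //; right.
Qed.

Lemma nonedge_nbhU u v (A B : {set 'I_n}) :
  v \in B -> (forall y w, y \in A -> w \in B -> (y, w) != (u, v) -> (y, w) \in E) ->
  u \in A -> B :\ v \subset nbhU E u.
Proof.
move=> vB AB_E uA; apply/subsetP => w; rewrite !inE => /andP [wv wB].
by apply: AB_E => //; rewrite xpair_eqE negb_and wv orbT.
Qed.

Hypotheses (s_le_t : s <= t) (s_le_n : s <= n).

Lemma degU_saturated y : s.-1 <= degU E y.
Proof.
rewrite degUE.
have [/existsP [v yv] | /existsPn all_adj] := boolP [exists v, (y, v) \notin E].
  have [A [B [cardAB yA vB AB_E]]] := saturated_nonedge yv.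
  have : #|B| <= #|nbhU E y|.+1.
    by rewrite (cardsD1 v B) vB ltnS subset_leq_card // (nonedge_nbhU vB AB_E).
  by case: cardAB => -[_ ->]; lia.
have -> : nbhU E y = setT by apply/setP => w; rewrite !inE; apply/negPn/all_adj.
by rewrite cardsT card_ord; lia.
Qed.

Section LowDegreeVertex.

Variable x : 'I_n.
Hypothesis deg_x : degU E x < t.-1.

Let S := nbhU E x.
Let Y := [set y | s.-1 <= #|nbhU E y :&: S|].

Lemma card_Y_nbh_of_nonnbh v :
  v \notin S -> t.-1 <= #|[set y in Y | (y, v) \in E]|.
Proof.
rewrite inE => xv; have [A [B [cardAB xA vB AB_E]]] := saturated_nonedge xv.
have Bv_S := nonedge_nbhU vB AB_E xA.
have [cardA cardB] : #|A| = t /\ #|B| = s.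
  have : #|B| <= #|S|.+1 by rewrite (cardsD1 v B) vB ltnS subset_leq_card.
  by case: cardAB => // -[_ ->]; move: deg_x; rewrite degUE -/S; lia.
have cardBv : #|B :\ v| = s.-1 by rewrite -cardB (cardsD1 v B) vB.
have cardAx : #|A :\ x| = t.-1 by rewrite -cardA (cardsD1 x A) xA.
rewrite -cardAx; apply/subset_leq_card/subsetP => y; rewrite !inE => /andP [yx yA].
have AB_E_y w : w \in B -> (y, w) \in E.
  by move=> wB; apply: AB_E; rewrite // xpair_eqE (negbTE yx).
rewrite AB_E_y // andbT -cardBv subset_leq_card //; apply/subsetP => w Bv_w.
by rewrite inE (subsetP Bv_S) // andbT inE AB_E_y //; case/setD1P: Bv_w.
Qed.

Lemma degU_in_Y y :
  y \in Y -> s.-1 + #|[set v in ~: S | (y, v) \in E]| <= degU E y.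
Proof.
rewrite inE degUE -(cardsID S (nbhU E y)) => Y_y; rewrite leq_add //.
by apply/eq_leq/eq_card => v; rewrite !inE andbC.
Qed.

Lemma card_edges_low_degree : s.-1 * n + t.-1 * #|~: S| <= #|E|.
Proof.
have deg_lower y :
    s.-1 + (if y \in Y then #|[set v in ~: S | (y, v) \in E]| else 0) <= degU E y.
  by case: ifP => [/degU_in_Y // | _]; rewrite addn0 degU_saturated.
rewrite (card_set_pairs E : #|E| = \sum_y degU E y).
apply: leq_trans; last by apply: leq_sum => y _; apply: deg_lower.
rewrite big_split /= sum_nat_const card_ord mulnC leq_add2l -big_mkcond double_count.
rewrite mulnC -sum_nat_const; apply: leq_sum => v.
by rewrite inE; apply: card_Y_nbh_of_nonnbh.
Qed.

Lemma card_saturated_low_degree : (s + t - 2) * n <= #|E| + (t - 1) * (t - 2).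
Proof.
have cardSC : #|~: S| = n - degU E x.
  by move: (cardsC S); rewrite card_ord degUE -/S; lia.
have deg_le_n : degU E x <= n by move: (max_card S); rewrite card_ord.
have := card_edges_low_degree; rewrite cardSC; move: deg_x; nia.
Qed.

End LowDegreeVertex.

End Saturated.

Theorem proposition2p1 :
  forall s t : nat, 1 <= s -> s < t ->
  exists N : nat, forall n : nat, N <= n ->
  forall E : {set 'I_n * 'I_n},
    Kst_saturated E s t ->
    min_degree E < t.-1 ->
    (s + t - 2) * n <= #|E| + (t - 1) * (t - 2).
Proof.
move=> s t _ lt_st; exists t => n le_tn E sat.
have s_le_n : s <= n by apply: leq_trans (ltnW lt_st) le_tn.
have t1_le_n : t.-1 <= n by apply: leq_trans (leq_pred t) le_tn.
rewrite /min_degree gtn_min => /orP [] /(bigminn_lt t1_le_n) [x deg_x].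
  exact: (card_saturated_low_degree sat (ltnW lt_st) s_le_n deg_x).
rewrite -card_transpose.
apply: (card_saturated_low_degree (Kst_saturated_transpose sat) (ltnW lt_st)
  s_le_n (x := x)).
by rewrite degU_transpose.
Qed.
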